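(* Let $Q_S=(X_0,Y_0,G,\mathcal{S})$ be a surrogate outcome query with graph $G=(V,E)$ and let $Q_T$ be its query transformation with collection of transportability diagrams $\mathcal{D}$; let $T$ be the set of all transportability nodes. If $X,Y\subseteq V$ are sets containing no transportability nodes and $(Y\perp X\mid Z)_{D_i}$ holds in some $D_i\in\mathcal{D}$, then $(Y\perp X\mid Z\setminus T)_G$ holds. Conversely, every conditional independence (d-separation) statement that holds in $G$ holds in every diagram of $\mathcal{D}$.
   Context: A (semi-Markovian) graph $G=(V,E)$ has acyclic directed edges and bidirected edges. d-separation $(Y\perp X\mid Z)$: every path between $X$ and $Y$ contains a non-collider in $Z$ or a collider $M$ (both adjacent path edges have arrowheads into $M$) with $\mathrm{De}(M)\cap Z=\emptyset$, where $\mathrm{De}(M)$ includes $M$. $\mathrm{An},\mathrm{De}$ include the set itself; $G[\overline{Z}]$ removes edges into $Z$; c-components are maximal sets connected by bidirected paths. Surrogate outcome query: $(X_0,Y_0,G,\mathcal{S})$ with $X_0,Y_0\subset V$ disjoint and $\mathcal{S}=\{(Z_i,W_i)\}_{i=1}^n$ satisfying $W_i\subset\mathrm{De}(Z_i)_G\setminus Z_i$, $Z_i\subset\mathrm{An}(W_i)_G\setminus W_i$, $\mathrm{De}(W_i)_G\cap Z_i=\emptyset$, $\mathrm{An}(W_{ij})_G\setminus W_i=\mathrm{An}(W_i)_G\setminus W_i$ for each $W_{ij}\in W_i$. Its query transformation has diagrams $D^{(1)},\dots,D^{(n)}$, where $D^{(i)}$ is $G$ plus a new node $T^{(i)}_j$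 with a single edge $T^{(i)}_j\to V_j$ for each $V_j\in(\mathrm{De}(Z_i)_G\setminus W_i)\cup(C_{W_i}\setminus\mathrm{An}(W_i)_{G[\overline{Z_i}]})$, $C_{W_i}$ being the union of vertex sets of c-components of $G$ meeting $W_i$. *)

From HB Require Import structures.
From mathcomp Require Import all_boot.
Set Implicit Arguments. Unset Strict Implicit. Unset Printing Implicit Defensive.

(* A graph on a finite vertex type U: directed edges [dir x y] (x -> y) and
   bidirected edges [bi x y] (x <-> y; read symmetrically). *)
Record graph (U : finType) := Graph { dir : rel U; bi : rel U }.

Section Graphs.
Variable U : finType.
Implicit Types (g : graph U) (A Z : {set U}).

Definition acyclic g := forall x y, dir g x y -> ~~ connect (dir g) y x.

(* descendants / ancestors, including the set itself *)
Definition De g A : {set U} := [set v | [exists a in A, connect (dir g) a v]].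
Definition An g A : {set U} := [set v | [exists a in A, connect (dir g) v a]].

(* G[\overline{Z}] : remove all edges with an arrowhead into Z *)
Definition cut_in g Z : graph U :=
  Graph (fun x y => dir g x y && (y \notin Z))
        (fun x y => [&& bi g x y, x \notin Z & y \notin Z]).

Definition ccomp_union g A : {set U} :=
  [set v | [exists a in A, connect (fun x y => bi g x y || bi g y x) a v]].

(* Edges along a path: Fwd = a -> b, Bwd = a <- b, Bid = a <-> b *)
Inductive ek := Fwd | Bwd | Bid.

Definition step_ok g (a : U) (k : ek) (b : U) :=
  match k with
  | Fwd => dir g a b
  | Bwd => dir g b a
  | Bid => bi g a b || bi g b a
  end.

Fixpoint valid_steps g (x : U) (s : seq (ek * U)) : bool :=
  match s with
  | [::] => true
  | (k, y) :: s' => step_ok g x k y && valid_steps g y s'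
  end.

Definition is_path g (x : U) (s : seq (ek * U)) :=
  valid_steps g x s && uniq (x :: map snd s).

(* m is a collider when the incoming edge k1 and outgoing edge k2 both have
   an arrowhead at m *)
Definition collider (k1 k2 : ek) :=
  (match k1 with Fwd | Bid => true | Bwd => false end) &&
  (match k2 with Bwd | Bid => true | Fwd => false end).

Definition blocked g Z (s : seq (ek * U)) :=
  exists (s1 s2 : seq (ek * U)) (k1 k2 : ek) (m y : U),
    s = s1 ++ (k1, m) :: (k2, y) :: s2 /\
    (if collider k1 k2 then De g [set m] :&: Z = set0 else m \in Z).

Definition dsep g (Y X Z : {set U}) :=
  forall (x : U) (s : seq (ek * U)),
    is_path g x s -> x \in X -> last x (map snd s) \in Y -> blocked g Z s.

End Graphs.

Section Surrogate.
Variables (V : finType) (G : graph V).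

Definition surrogate_pair (p : {set V} * {set V}) :=
  let: (Z, W) := p in
  [/\ W \subset De G Z :\: Z,
      Z \subset An G W :\: W,
      De G W :&: Z = set0 &
      forall w, w \in W -> An G [set w] :\: W = An G W :\: W].

Definition surrogate_query (X0 Y0 : {set V}) (S : seq ({set V} * {set V})) :=
  [disjoint X0 & Y0] /\ forall p, p \in S -> surrogate_pair p.

(* vertices V_j receiving a transportability node T_j in D^(i) *)
Definition tset (p : {set V} * {set V}) : {set V} :=
  let: (Z, W) := p in
  (De G Z :\: W) :|: (ccomp_union G W :\: An (cut_in G Z) W).

(* vertex type of D^(i): original vertices (inl) plus one transportability
   node (inr) for each vertex of tset p *)
Definition dvertex (p : {set V} * {set V}) : finType :=
  (V + {v : V | v \in tset p})%type.

Definition diagram (p : {set V} * {set V}) : graph (dvertex p) :=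
  Graph (fun a b : dvertex p => match a, b with
           | inl x, inl y => dir G x y
           | inr t, inl y => val t == y
           | _, _ => false end)
        (fun a b : dvertex p => match a, b with
           | inl x, inl y => bi G x y
           | _, _ => false end).

Definition emb (p : {set V} * {set V}) (A : {set V}) : {set dvertex p} :=
  [set (@inl V {v : V | v \in tset p} x : dvertex p) | x in A].

(* Z \ T, viewed as a subset of V *)
Definition untrans (p : {set V} * {set V}) (Z : {set dvertex p}) : {set V} :=
  [set v | (inl v : dvertex p) \in Z].

End Surrogate.

(** Each transportability node [T_j] is a source whose only edge is
    [T_j -> V_j].  Hence it has no ancestors among the original vertices, it
    is nobody's descendant besides itself, and it cannot be an interior vertex
    of a simple path (both path edges would lead to [V_j]).  So paths between
    original vertices of a diagram are exactly the paths of [G], descendant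
    sets of original vertices are unchanged, and a vertex blocks such a path
    given [Z] in the diagram iff it blocks it given [Z \ T] in [G]. *)

From mathcomp Require Import all_boot.
Set Implicit Arguments. Unset Strict Implicit. Unset Printing Implicit Defensive.

Lemma mem_De1 (U : finType) (g : graph U) m v :
  (v \in De g [set m]) = connect (dir g) m v.
Proof.
rewrite inE; apply/existsP/idP => [[a /andP[/set1P-> //]]|mv].
by exists m; rewrite set11.
Qed.

Section Diagram.
Variables (V : finType) (G : graph V) (p : {set V} * {set V}).
Local Notation D := (diagram G p).
Local Notation DV := (dvertex G p).
Local Notation orig := (@inl V {v : V | v \in tset G p}).

Lemma mem_emb (A : {set V}) v : (orig v \in emb G p A) = (v \in A).
Proof. exact: mem_imset _ _ inl_inj. Qed.

Lemma trans_notin_emb (A : {set V}) t : (inr t \in emb G p A) = false.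
Proof. by apply/imsetP=> -[]. Qed.

Lemma embI_untrans (A : {set V}) (Z : {set DV}) :
  emb G p A :&: Z = emb G p (A :&: untrans Z).
Proof.
apply/setP=> -[v|t]; last by rewrite in_setI !trans_notin_emb.
by rewrite in_setI !mem_emb in_setI [v \in untrans Z]inE.
Qed.

Lemma untrans_emb (A : {set V}) : untrans (emb G p A) = A.
Proof. by apply/setP=> v; rewrite inE mem_emb. Qed.

Lemma emb_eq0 (A : {set V}) : (emb G p A == set0) = (A == set0).
Proof. exact: imset_eq0. Qed.

Lemma connect_diagram_orig a w :
  connect (dir D) (orig a) w = [exists v, (w == orig v) && connect (dir G) a v].
Proof.
apply/idP/existsP=> [/connectP[q] | [v /andP[/eqP-> /connectP[q gq ->]]]].
  elim: q a => [|[b|t] q IHq] a /=.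
  - by move=> _ ->; exists a; rewrite eqxx connect0.
  - case/andP=> ab /IHq/[apply] -[v /andP[wv bv]].
    by exists v; rewrite wv (connect_trans (connect1 ab) bv).
  - by [].
apply/connectP; exists (map orig q); last by rewrite last_map.
by elim: q a gq => //= b q IHq a /andP[-> /IHq].
Qed.

Lemma De_diagram_orig m : De D [set orig m] = emb G p (De G [set m]).
Proof.
apply/setP=> w; rewrite mem_De1 connect_diagram_orig.
apply/existsP/imsetP=> [[v /andP[/eqP-> mv]] | [v mv ->]].
  by exists v; rewrite ?mem_De1.
by exists v; rewrite eqxx -mem_De1.
Qed.

Definition lift_steps (s : seq (ek * V)) : seq (ek * DV) :=
  map (fun e => (e.1, orig e.2)) s.

Definition unorig (w : DV) : V := match w with inl v => v | inr t => val t end.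

Definition unlift_steps (s : seq (ek * DV)) : seq (ek * V) :=
  map (fun e => (e.1, unorig e.2)) s.

Lemma lift_stepsK : cancel lift_steps unlift_steps.
Proof. by elim=> [|[k v] s IHs] //=; rewrite IHs. Qed.

Lemma lift_steps_cat s1 s2 : lift_steps (s1 ++ s2) = lift_steps s1 ++ lift_steps s2.
Proof. exact: map_cat. Qed.

Lemma map_snd_lift_steps s : map snd (lift_steps s) = map orig (map snd s).
Proof. by rewrite -!map_comp. Qed.

Lemma last_lift_steps x s :
  last (orig x) (map snd (lift_steps s)) = orig (last x (map snd s)).
Proof. by elim: s x => [|[k y] s IHs] x //=. Qed.

Lemma is_path_lift_steps x s : is_path D (orig x) (lift_steps s) = is_path G x s.
Proof.
have valid_lift y : valid_steps D (orig y) (lift_steps s) = valid_steps G y s.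
  by elim: s y => [|[k z] s IHs] y //=; rewrite IHs; case: k.
by rewrite /is_path valid_lift map_snd_lift_steps -map_cons (map_inj_uniq inl_inj).
Qed.

Lemma step_ok_to_trans a k t : step_ok D a k (inr t) -> a = orig (val t).
Proof. by case: k; case: a => //= a /eqP->. Qed.

Lemma step_ok_from_trans t k b : step_ok D (inr t) k b -> b = orig (val t).
Proof. by case: k; case: b => //= b /eqP->. Qed.

Lemma path_between_orig x s y :
  is_path D (orig x) s -> last (orig x) (map snd s) = orig y ->
  exists s', s = lift_steps s'.
Proof.
case/andP; elim: s x => [|[k [v|t]] s IHs] x /=; first by exists [::].
  case/andP=> _ vs /andP[_ us] /(IHs v vs us) [s' ->].
  by exists ((k, v) :: s').
case/andP=> /step_ok_to_trans[->] vs /andP[xs _].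
case: s {IHs} vs xs => [|[k' b] s] //= /andP[/step_ok_from_trans-> _].
by rewrite !inE eqxx orbT.
Qed.

Lemma blocked_lift_steps (Z : {set DV}) s :
  blocked D Z (lift_steps s) <-> blocked G (untrans Z) s.
Proof.
have blocks_at k1 k2 m :
    (if collider k1 k2 then De D [set orig m] :&: Z = set0 else orig m \in Z) <->
    (if collider k1 k2 then De G [set m] :&: untrans Z = set0 else m \in untrans Z).
  case: (collider k1 k2); last by rewrite inE.
  rewrite De_diagram_orig embI_untrans.
  by split=> [/eqP | ->]; [rewrite emb_eq0 => /eqP | exact: imset0].
split=> [[s1 [s2 [k1 [k2 [m [y [Es Cm]]]]]]] | [s1 [s2 [k1 [k2 [m [y [-> Cm]]]]]]]].
  have [v Em] : exists v, m = orig v.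
    have : m \in map snd (lift_steps s) by rewrite Es map_cat mem_cat inE eqxx orbT.
    by rewrite map_snd_lift_steps => /mapP[v _ ->]; exists v.
  subst m; exists (unlift_steps s1), (unlift_steps s2), k1, k2, v.
  exists (unorig y); split; last exact/blocks_at.
  by rewrite -[s]lift_stepsK Es /unlift_steps map_cat.
exists (lift_steps s1), (lift_steps s2), k1, k2, (orig m), (orig y).
by split; [rewrite lift_steps_cat | exact/blocks_at].
Qed.

Lemma dsep_diagram_untrans (X Y : {set V}) (Z : {set DV}) :
  dsep D (emb G p Y) (emb G p X) Z -> dsep G Y X (untrans Z).
Proof.
move=> sepD x s ps xX lastY; apply/blocked_lift_steps/(sepD (orig x)).
- by rewrite is_path_lift_steps.
- by rewrite mem_emb.
- by rewrite last_lift_steps mem_emb.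
Qed.

Lemma dsep_diagram_emb (X Y Z : {set V}) :
  dsep G Y X Z -> dsep D (emb G p Y) (emb G p X) (emb G p Z).
Proof.
move=> sepG w s ps /imsetP[x xX wx] /imsetP[y yY lasty]; subst w.
have [s' Es] := path_between_orig ps lasty; subst s.
rewrite last_lift_steps in lasty; case: lasty => lasty.
apply/blocked_lift_steps; rewrite untrans_emb.
by apply: (sepG x); rewrite -?is_path_lift_steps ?lasty.
Qed.

End Diagram.

Theorem corollary1 (V : finType) (G : graph V) (X0 Y0 : {set V})
    (S : seq ({set V} * {set V})) :
  acyclic G -> surrogate_query G X0 Y0 S ->
  (forall (i : nat), i < size S ->
     forall (X Y : {set V}) (Z : {set dvertex G (nth (set0, set0) S i)}),
       dsep (diagram G (nth (set0, set0) S i))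
            (emb G (nth (set0, set0) S i) Y) (emb G (nth (set0, set0) S i) X) Z ->
       dsep G Y X (untrans Z)) /\
  (forall X Y Z : {set V}, dsep G Y X Z ->
     forall (i : nat), i < size S ->
       dsep (diagram G (nth (set0, set0) S i))
            (emb G (nth (set0, set0) S i) Y) (emb G (nth (set0, set0) S i) X)
            (emb G (nth (set0, set0) S i) Z)).
Proof.
move=> _ _; split=> [i _ X Y Z | X Y Z sepG i _].
  exact: dsep_diagram_untrans.
exact: dsep_diagram_emb.
Qed.
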